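(* Let $k,d$ be positive integers with $d\equiv0\pmod k$. There exists $n_0=n_0(d,k)$ such that for every $n\ge n_0$, $p(n,k,d)=\binom{n}{\le d/k}$. Moreover, for such $n$ the only $k$-wise $(n-d)$-union family $\mathcal{F}\subset2^{[n]}$ of size $\binom{n}{\le d/k}$ is $\binom{[n]}{\le d/k}$.
   Context: $[n]=\{1,\dots,n\}$. $\binom{[n]}{\le t}=\{S\subset[n]:|S|\le t\}$ and $\binom{n}{\le t}$ is its size. A family $\mathcal{F}\subset2^{[n]}$ is $k$-wise $(n-d)$-union if $|S_1\cup\cdots\cup S_k|\le d$ for all (not necessarily distinct) $S_1,\dots,S_k\in\mathcal{F}$. $p(n,k,d)$ is the maximum size of a $k$-wise $(n-d)$-union family $\mathcal{F}\subset2^{[n]}$. *)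

From mathcomp Require Import all_boot.
Set Implicit Arguments. Unset Strict Implicit. Unset Printing Implicit Defensive.

(* A family F of subsets of [n] (modelled as 'I_n) is k-wise (n-d)-union if
   |S_1 u ... u S_k| <= d for all (not necessarily distinct) S_1..S_k in F. *)
Definition kwise_union (n k d : nat) (F : {set {set 'I_n}}) : bool :=
  [forall f : {ffun 'I_k -> {set 'I_n}},
     [forall i, f i \in F] ==> (#|\bigcup_(i < k) f i| <= d)].

Definition p (n k d : nat) : nat :=
  \max_(F : {set {set 'I_n}} | kwise_union k d F) #|F|.

Definition binom_le_set (n t : nat) : {set {set 'I_n}} := [set S : {set 'I_n} | #|S| <= t].
Definition binom_le (n t : nat) : nat := \sum_(0 <= i < t.+1) 'C(n, i).

From mathcomp Require Import all_boot zify.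

Set Implicit Arguments.
Unset Strict Implicit.
Unset Printing Implicit Defensive.

(* Write t = d/k.  The family of all sets of size at most t is k-wise
   (n-tk)-union, and a family all of whose members have at most t elements
   is contained in it.  If instead F contains a set of size larger than t, choose j < k members
   of F whose union U has more than jt elements with j maximal.  Adding any
   further member B of F to these j sets gives at most (j+1)t elements, so
   |B \ U| < t.  Hence every member of F is a subset of U (with |U| <= tk)
   together with fewer than t outside elements, giving
   |F| <= 2^(tk) * binom(n, <= t-1), which is smaller than binom(n, <= t)
   once n is large. *)

Lemma card_bigcup_le (I : Type) (T : finType) (r : seq I) (P : pred I)
    (A : I -> {set T}) :
  #|\bigcup_(i <- r | P i) A i| <= \sum_(i <- r | P i) #|A i|.
Proof.
apply: (big_ind2 (fun (X : {set T}) s => #|X| <= s)) => //; first by rewrite cards0.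
by move=> X x Y y leX leY; apply: leq_trans (leq_card_setU X Y) (leq_add leX leY).
Qed.

Lemma cardsUD (T : finType) (A B : {set T}) : #|A :|: B| = #|A :\: B| + #|B|.
Proof. by have := cardsUI A B; have := cardsID B A; lia. Qed.

Lemma card_binom_le_set n t : #|binom_le_set n t| = binom_le n t.
Proof.
elim: t => [|t IH].
  have -> : binom_le_set n 0 = [set set0].
    by apply/setP => X; rewrite !inE leqn0 cards_eq0.
  by rewrite cards1 /binom_le big_nat1 bin0.
have -> : binom_le_set n t.+1 = binom_le_set n t :|: [set X : {set 'I_n} | #|X| == t.+1].
  by apply/setP => X; rewrite !inE leq_eqVlt ltnS orbC.
rewrite cardsU.
have -> : binom_le_set n t :&: [set X : {set 'I_n} | #|X| == t.+1] = set0.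
  by apply/setP => X; rewrite !inE; case: eqP => [->|]; rewrite ?ltnn ?andbF.
rewrite cards0 subn0 card_draws card_ord IH.
by rewrite /binom_le [in RHS]big_nat_recr.
Qed.

Lemma mul_bin_leq_binS n i c : c * i.+1 + i <= n -> c * 'C(n, i) <= 'C(n, i.+1).
Proof.
move=> hn; rewrite -(leq_pmul2l (ltn0Sn i)) mul_bin_left mulnCA mulnA leq_mul2r.
apply/orP; right; rewrite leq_subRL; first by rewrite addnC.
exact: leq_trans (leq_addl _ _) hn.
Qed.

(* Each term of the smaller sum is dominated by the next binomial
   coefficient, and the term 'C(n, 0) = 1 is left over. *)
Lemma mul_binom_le_pred_lt n t c :
  0 < t -> c * t + t <= n -> c * binom_le n t.-1 < binom_le n t.
Proof.
case: t => [//|t] _ hn; rewrite /binom_le /= [X in _ < X]big_nat_recl // bin0 add1n ltnS.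
rewrite big_distrr /= !big_mkord; apply: leq_sum => i _.
apply: mul_bin_leq_binS; apply: leq_trans hn.
by apply: leq_add; [rewrite leq_mul2l ltn_ord orbT | apply: leqW; rewrite -ltnS].
Qed.

Lemma card_le_pow2_binom_le n (U : {set 'I_n}) s (F : {set {set 'I_n}}) :
  (forall B, B \in F -> #|B :\: U| <= s) -> #|F| <= 2 ^ #|U| * binom_le n s.
Proof.
move=> hF; rewrite -card_powerset -card_binom_le_set -cardsX.
apply: leq_trans (leq_imset_card (fun X => X.1 :|: X.2) _).
apply/subset_leq_card/subsetP => B BF; apply/imsetP.
by exists (B :&: U, B :\: U); rewrite ?setID // !inE /= subsetIr hF.
Qed.

Lemma kwise_union_bigcup n k d (F : {set {set 'I_n}}) m (A : 'I_m -> {set 'I_n}) :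
  kwise_union k d F -> m <= k -> (forall i, A i \in F) ->
  #|\bigcup_(i < m) A i| <= d.
Proof.
case: m A => [|m] A /forallP kw mk AF; first by rewrite big_ord0 cards0.
pose f := [ffun i : 'I_k => A (inord i)].
have /implyP := kw f; rewrite (_ : [forall i, f i \in F]); last first.
  by apply/forallP => i; rewrite ffunE.
move=> /(_ isT); apply/leq_trans/subset_leq_card/bigcupsP => i _.
have ik : i < k by apply: leq_trans (ltn_ord i) mk.
apply: subset_trans (bigcup_sup (Ordinal ik) isT).
by rewrite ffunE inord_val.
Qed.

Lemma binom_le_set_kwise_union n k t : kwise_union k (t * k) (binom_le_set n t).
Proof.
apply/forallP => f; apply/implyP => /forallP fF.
apply: leq_trans (card_bigcup_le _ _ _) _.
rewrite mulnC -[X in _ <= X * _]card_ord -sum_nat_const.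
by apply: leq_sum => i _; have := fF i; rewrite inE.
Qed.

Lemma kwise_union_kernel n k t (F : {set {set 'I_n}}) A :
  0 < k -> kwise_union k (t * k) F -> A \in F -> t < #|A| ->
  exists2 U : {set 'I_n}, #|U| <= t * k & forall B, B \in F -> #|B :\: U| < t.
Proof.
move=> k_gt0 kw AF ltA.
pose spread j := (j <= k) && [exists f : {ffun 'I_j -> {set 'I_n}},
  [forall i, f i \in F] && (j * t < #|\bigcup_(i < j) f i|)].
have spread1 : spread 1.
  rewrite /spread k_gt0; apply/existsP; exists [ffun=> A].
  by rewrite big_ord1 ffunE mul1n ltA andbT; apply/forallP => i; rewrite ffunE.
have spread_le j : spread j -> j <= k by case/andP.
have [j /andP[jk /existsP[f /andP[/forallP fF ltU]]] jmax] :=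
  ex_maxnP (ex_intro spread 1 spread1) spread_le.
exists (\bigcup_(i < j) f i); first exact: kwise_union_bigcup kw jk fF.
move=> B BF.
have ltjk : j < k.
  rewrite ltn_neqAle jk andbT; apply/eqP => ejk; subst k.
  by have := kwise_union_bigcup kw (leqnn j) fF; rewrite mulnC leqNgt ltU.
pose g : {ffun 'I_j.+1 -> {set 'I_n}} :=
  [ffun i => if unlift ord0 i is Some i' then f i' else B].
have gF i : g i \in F by rewrite ffunE; case: (unlift ord0 i).
have gU : \bigcup_(i < j.+1) g i = B :|: \bigcup_(i < j) f i.
  rewrite big_ord_recl ffunE unlift_none; congr (_ :|: _).
  by apply: eq_bigr => i _; rewrite ffunE liftK.
have leBU : #|B :\: \bigcup_(i < j) f i| + #|\bigcup_(i < j) f i| <= j.+1 * t.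
  rewrite -cardsUD leqNgt -gU; apply/negP => ltBU.
  have : spread j.+1.
    by rewrite /spread ltjk; apply/existsP; exists g; rewrite ltBU andbT; apply/forallP.
  by move/jmax; rewrite ltnn.
rewrite -(ltn_add2r #|\bigcup_(i < j) f i|); apply: leq_ltn_trans leBU _.
by rewrite mulSn ltn_add2l.
Qed.

Lemma kwise_union_subset_or_card_lt n k t (F : {set {set 'I_n}}) :
  0 < k -> 0 < t -> 2 ^ (t * k) * t + t <= n -> kwise_union k (t * k) F ->
  F \subset binom_le_set n t \/ #|F| < binom_le n t.
Proof.
move=> k_gt0 t_gt0 large kw.
have [/existsP[A /andP[AF ltA]] | small] := boolP [exists A in F, t < #|A|]; last first.
  left; apply/subsetP => A AF; rewrite inE leqNgt.
  by apply: contra small => ltA; apply/existsP; exists A; rewrite AF.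
right; have [U leU ltBU] := kwise_union_kernel k_gt0 kw AF ltA.
apply: leq_ltn_trans (mul_binom_le_pred_lt t_gt0 large).
apply: leq_trans (card_le_pow2_binom_le (U := U) (s := t.-1) _) _.
  by move=> B BF; rewrite -ltnS prednK ?ltBU.
by rewrite leq_mul2r leq_pexp2l ?leU ?orbT.
Qed.

Theorem proposition9 (k d : nat) (hk : 0 < k) (hd : 0 < d) (hkd : k %| d) :
  exists n0 : nat, forall n : nat, n0 <= n ->
    p n k d = binom_le n (d %/ k) /\
    (forall F : {set {set 'I_n}},
       kwise_union k d F -> #|F| = binom_le n (d %/ k) ->
       F = binom_le_set n (d %/ k)).
Proof.
set t := d %/ k; have d_eq : d = t * k by rewrite divnK.
have t_gt0 : 0 < t by move: hd; rewrite d_eq muln_gt0 => /andP[].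
exists (2 ^ d * t + t) => n large; rewrite d_eq in large *.
have alt F : kwise_union k (t * k) F ->
    F \subset binom_le_set n t \/ #|F| < binom_le n t.
  exact: kwise_union_subset_or_card_lt.
split.
  apply/eqP; rewrite eqn_leq -{2}card_binom_le_set.
  rewrite leq_bigmax_cond ?binom_le_set_kwise_union // andbT.
  apply/bigmax_leqP => F /alt[/subset_leq_card | /ltnW //].
  by rewrite card_binom_le_set.
move=> F /alt[subF | ltF] cardF; last by rewrite cardF ltnn in ltF.
by apply/eqP; rewrite eqEcard subF card_binom_le_set cardF /=.
Qed.
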